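(* Let $\mathbf{L}=L_0+L_1\mathfrak{q}$, where $L_0\in\mathbb{R}^{n\times n}$ is lower triangular and $L_1\in\mathbb{R}^{n\times n}$ is lower triangular with zeros on the diagonal. Let $K_2\in\mathbb{R}^{n\times p}$ and $x_0\in\mathbb{R}^p$. If $L_0$ is invertible, then for any $r\in(0,1)$ the solution $z\in\ell_{2+}^n$ to $$\mathbf{L}\mathbf{L}^*z=(r^0K_2x_0,\ r^1K_2x_0,\ r^2K_2x_0,\ \ldots)$$ satisfies $$K_1z[0]=r^0K_2x_0,\qquad\text{where } K_1=(L_0+L_1r)L_0^\top.$$
   Context: $\ell_{2+}^n$ is the Hilbert space of square-summable sequences $(v[0],v[1],\ldots)$ with $v[k]\in\mathbb{R}^n$ and inner product $\langle x,y\rangle=\sum_k x[k]^\top y[k]$. The forward shift $\mathfrak{q}$ acts by $(\mathfrak{q}v)[k]=v[k+1]$, so $(\mathbf{L}v)[k]=L_0v[k]+L_1v[k+1]$; its adjoint $\mathfrak{q}^*$ acts by $(\mathfrak{q}^*v)[0]=0$, $(\mathfrak{q}^*v)[k]=v[k-1]$ for $k\ge1$, so $\mathbf{L}^*=L_0^\top+L_1^\top\mathfrak{q}^*$. *)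

From HB Require Import structures.
From mathcomp Require Import all_boot all_order all_algebra.
From mathcomp Require Export reals.
Set Implicit Arguments. Unset Strict Implicit. Unset Printing Implicit Defensive.
Import Order.TTheory GRing.Theory Num.Theory.
Local Open Scope ring_scope.

Definition vseq (R : realType) (n : nat) := nat -> 'cV[R]_n.

(* Membership in l_{2+}^n: sum_k ||v[k]||^2 < oo (nonnegative terms, so
   equivalently the partial sums are bounded). *)
Definition in_l2p (R : realType) (n : nat) (v : vseq R n) : Prop :=
  exists M : R, forall N : nat,
    \sum_(k < N) \sum_(i < n) (v k i 0) ^+ 2 <= M.

Definition fshift (R : realType) (n : nat) (v : vseq R n) : vseq R n :=
  fun k => v k.+1.
Definition fshift_adj (R : realType) (n : nat) (v : vseq R n) : vseq R n :=
  fun k => if k is k'.+1 then v k' else 0.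

Definition Lop (R : realType) (n : nat) (L0 L1 : 'M[R]_n) (v : vseq R n)
  : vseq R n := fun k => L0 *m v k + L1 *m fshift v k.
Definition Lop_adj (R : realType) (n : nat) (L0 L1 : 'M[R]_n) (v : vseq R n)
  : vseq R n := fun k => L0^T *m v k + L1^T *m fshift_adj v k.

Definition lower_tri (R : realType) (n : nat) (A : 'M[R]_n) : Prop :=
  forall i j : 'I_n, (i < j)%N -> A i j = 0.
Definition strict_lower_tri (R : realType) (n : nat) (A : 'M[R]_n) : Prop :=
  forall i j : 'I_n, (i <= j)%N -> A i j = 0.

(* Write w := L^* z, so that L w = (r^k K2 x0)_k.  The sequence d[k] := w[k+1] - r w[k] then
   solves L d = 0.  Because L0 is lower triangular with nonzero diagonal and L1 is strictly
   lower triangular, row i of L d = 0 reads L0[i,i] d[k][i] = 0 once the rows above i are known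
   to vanish, so d = 0 by induction on the row index.  This holds for arbitrary sequences.  Hence w[1] = r w[0], and the first
   equation of L w reads (L0 + r L1) w[0] = K2 x0 with w[0] = L0^T z[0]. *)

From HB Require Import structures.
From mathcomp Require Import all_boot all_order all_algebra.
From mathcomp Require Import reals.
Set Implicit Arguments. Unset Strict Implicit. Unset Printing Implicit Defensive.
Import Order.TTheory GRing.Theory Num.Theory.
Local Open Scope ring_scope.

Lemma trig_mx_diag_neq0 (R : comUnitRingType) (n : nat) (A : 'M[R]_n) :
  is_trig_mx A -> A \in unitmx -> forall i, A i i != 0.
Proof.
move=> A_trig A_unit i; apply/eqP => Aii0.
move: A_unit; rewrite unitmxE det_trig //.
by rewrite (bigD1 i) //= Aii0 mul0r unitr0.
Qed.

Lemma mulmx_col_diag (R : pzSemiRingType) (n : nat) (A : 'M[R]_n) (v : 'cV[R]_n)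
    (i : 'I_n) :
  (forall j, j != i -> A i j * v j 0 = 0) -> (A *m v) i 0 = A i i * v i 0.
Proof. by move=> off_diag0; rewrite mxE (bigD1 i) //= big1 ?addr0. Qed.

Section CausalOperator.

Variables (R : idomainType) (n : nat) (L0 L1 : 'M[R]_n).
Hypothesis L0_trig : is_trig_mx L0.
Hypothesis L1_strict : forall i j : 'I_n, (i <= j)%N -> L1 i j = 0.
Hypothesis L0_diag : forall i, L0 i i != 0.

Lemma causal_kernel_eq0 (d : nat -> 'cV[R]_n) :
  (forall k, L0 *m d k + L1 *m d k.+1 = 0) -> forall k, d k = 0.
Proof.
move=> Ld0.
have L1_trig : is_trig_mx L1 by apply/is_trig_mxP => i j /ltnW; apply: L1_strict.
suff rows0 m : forall (i : 'I_n) k, (i < m)%N -> d k i 0 = 0.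
  by move=> k; apply/matrixP => i j; rewrite ord1 mxE (rows0 n).
elim: m => [//|m IHm] i k; rewrite ltnS leq_eqVlt => /predU1P[im|]; last exact: IHm.
have above0 k' (j : 'I_n) : (j < i)%N -> d k' j 0 = 0 by rewrite im; apply: IHm.
have off_diag0 (A : 'M[R]_n) k' (A_trig : is_trig_mx A) j :
    j != i -> A i j * d k' j 0 = 0.
  rewrite neq_ltn => /orP[ji|ij]; first by rewrite above0 ?mulr0.
  by rewrite (is_trig_mxP A_trig) ?mul0r.
have /matrixP/(_ i 0) := Ld0 k; rewrite [LHS]mxE [RHS]mxE.
rewrite !mulmx_col_diag; try exact: off_diag0.
by rewrite L1_strict // mul0r addr0 => /eqP; rewrite mulf_eq0 (negbTE (L0_diag i)) => /eqP.
Qed.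

Lemma causal_geometric (r : R) (c : 'cV[R]_n) (w : nat -> 'cV[R]_n) :
  (forall k, L0 *m w k + L1 *m w k.+1 = r ^+ k *: c) -> forall k, w k.+1 = r *: w k.
Proof.
move=> Lw k; apply/eqP; rewrite -subr_eq0; apply/eqP; move: k.
apply: (@causal_kernel_eq0 (fun k => w k.+1 - r *: w k)) => k.
by rewrite !mulmxBr -!scalemxAr addrACA -opprD -scalerDr !Lw scalerA -exprS subrr.
Qed.

End CausalOperator.

Theorem lemma3 (R : realType) (n p : nat) (L0 L1 : 'M[R]_n)
  (K2 : 'M[R]_(n, p)) (x0 : 'cV[R]_p) :
  lower_tri L0 -> strict_lower_tri L1 -> L0 \in unitmx ->
  forall r : R, 0 < r < 1 ->
  forall z : vseq R n, in_l2p z ->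
  (forall k : nat, Lop L0 L1 (Lop_adj L0 L1 z) k = r ^+ k *: (K2 *m x0)) ->
  (L0 + r *: L1) *m L0^T *m z 0%N = r ^+ 0 *: (K2 *m x0).
Proof.
move=> /is_trig_mxP L0_trig L1_strict L0_unit r _ z _ Lw.
set w := Lop_adj L0 L1 z in Lw.
have w0 : w 0%N = L0^T *m z 0%N by rewrite /w /Lop_adj mulmx0 addr0.
have w1 : w 1%N = r *: w 0%N.
  exact: (causal_geometric L0_trig L1_strict (trig_mx_diag_neq0 L0_trig L0_unit) Lw).
by rewrite -mulmxA -w0 mulmxDl -scalemxAl scalemxAr -w1; apply: Lw.
Qed.
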